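(* Let $d\geq 1$, $n\geq 1$ and $r$ be integers with $r\geq d+n$. Then a general form $F$ of degree $d$ in $n+1$ variables has an apolar star configuration $\mathbb{X}(r)\subset\mathbb{P}^n$.
   Context: Let $S=\mathbb{C}[x_0,\dots,x_n]$ and $T=\mathbb{C}[y_0,\dots,y_n]$, where $T$ acts on $S$ by differentiation, $y_j=\partial/\partial x_j$. For a form $F\in S$ of degree $d$, $F^\perp=\{\partial\in T:\partial F=0\}$. A finite set of points $\mathbb{X}\subset\mathbb{P}^n=\mathbb{P}(S_1)$ with defining ideal $I(\mathbb{X})\subseteq T$ is apolar to $F$ if $I(\mathbb{X})\subseteq F^\perp$. A star configuration $\mathbb{X}(r)\subset\mathbb{P}^n$: take $r$ linear forms $l_1,\dots,l_r\in T_1$ such that any $n+1$ of them are linearly independent; $\mathbb{X}(r)$ is the set of $\binom{r}{n}$ points obtained by intersecting the hyperplanes $\{l_i=0\}$ $n$ at a time in all possible ways, i.e. the variety defined by $\bigcap_{\{j_1,\dots,j_n\}\subseteq\{1,\dots,r\}}(l_{j_1},\dots,l_{j_n})$. ''A general form'' means any form in a suitable nonempty Zariski open subset of the space of degree $d$ forms. *)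

From HB Require Import structures.
From mathcomp Require Import all_boot all_order all_algebra.
From mathcomp Require Import Rstruct.
From mathcomp Require Import complex.
From mathcomp Require Import mpoly.
Set Implicit Arguments. Unset Strict Implicit. Unset Printing Implicit Defensive.
Import GRing.Theory Num.Theory.
Local Open Scope ring_scope.

Definition C : closedFieldType := (Rdefinitions.R)[i].

(* Both S = C[x_0..x_n] and T = C[y_0..y_n] are modelled by {mpoly C[n.+1]}. *)

(* Action of T on S by differentiation, y_j = d/dx_j :
   g(d) F = sum_m g_m * d^m F. *)
Definition diff_act (n : nat) (g F : {mpoly C[n]}) : {mpoly C[n]} :=
  \sum_(m <- msupp g) g@_m *: F^`M[m].

(* A point of P^n = P(S_1) is represented by a nonzero vector of
   homogeneous coordinates a : 'I_n.+1 -> C; a form g in T vanishes at it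
   iff g.@[a] = 0. *)
Definition nonzero_vec (n : nat) (a : 'I_n -> C) : Prop := exists i, a i != 0.

Definition any_np1_independent (n r : nat) (l : 'I_r -> {mpoly C[n.+1]}) : Prop :=
  forall s : 'I_n.+1 -> 'I_r, injective s ->
    forall c : 'I_n.+1 -> C, \sum_(k < n.+1) c k *: l (s k) = 0 ->
      forall k, c k = 0.

Definition in_star (n r : nat) (l : 'I_r -> {mpoly C[n.+1]}) (a : 'I_n.+1 -> C)
  : Prop :=
  @nonzero_vec n.+1 a /\
  exists J : {set 'I_r}, #|J| = n /\ forall j, j \in J -> (l j).@[a] = 0.

Definition in_ideal_star (n r : nat) (l : 'I_r -> {mpoly C[n.+1]})
  (g : {mpoly C[n.+1]}) : Prop :=
  forall a, @in_star n r l a -> g.@[a] = 0.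

Definition star_apolar (n r : nat) (l : 'I_r -> {mpoly C[n.+1]})
  (F : {mpoly C[n.+1]}) : Prop :=
  forall g, @in_ideal_star n r l g -> diff_act g F = 0.

Definition has_apolar_star (n r : nat) (F : {mpoly C[n.+1]}) : Prop :=
  exists l : 'I_r -> {mpoly C[n.+1]},
    (forall j, l j \is 1.-homog) /\ @any_np1_independent n r l /\ @star_apolar n r l F.

(* Coordinates on the space S_d of degree-d forms: the coefficients of the
   monomials of degree exactly d. *)
Definition monos_deg (n d : nat) : seq 'X_{1..n} :=
  [seq m <- [seq val m | m : 'X_{1..n < d.+1}] | mdeg m == d].

Definition form_coords (n d : nat) (F : {mpoly C[n]})
  : 'I_(size (monos_deg n d)) -> C :=
  fun i => F@_(nth 0%MM (monos_deg n d) i).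

(* U is a Zariski open subset of S_d (identified with C^N through the
   coordinates above): on S_d it is the complement of the common zero
   locus of a set Sig of polynomials in the coordinates. *)
Definition zariski_open_forms (n d : nat) (U : {mpoly C[n]} -> Prop) : Prop :=
  exists Sig : {mpoly C[size (monos_deg n d)]} -> Prop,
    forall F, F \is d.-homog ->
      (U F <-> exists P, Sig P /\ P.@[@form_coords n d F] != 0).

From HB Require Import structures.
From mathcomp Require Import all_boot all_order all_algebra.
From mathcomp Require Import Rstruct.
From mathcomp Require Import complex.
From mathcomp Require Import mpoly.
From mathcomp Require Import zify.

(* Every form of degree d works, with the star configuration of the linear
   forms l_j = sum_i j^i y_i (any n+1 of them are independent by Vandermonde).
   Put m = r - n >= d.  For each n-subset J of {1..r} there is a point a_J of
   X(r) where l_j vanishes exactly for j in J, so the degree-m forms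
   f_J = prod_{j notin J} l_j satisfy f_J(a_K) <> 0 iff J = K.  There are
   binom(r, n) = dim T_m of them, hence they form a basis of T_m and no nonzero
   form of degree m vanishes on X(r); multiplying by powers of y_0, the same
   holds in every degree e <= m.  Since X(r) is a cone, the homogeneous
   components of an element of I(X(r)) lie in I(X(r)), so I(X(r)) contains no
   operator of degree <= d, while every operator of degree > d kills F. *)

Set Implicit Arguments.
Unset Strict Implicit.
Unset Printing Implicit Defensive.
Import GRing.Theory Num.Theory.
Local Open Scope ring_scope.

Section LinearForms.
Variables (R : nzRingType) (k : nat).
Implicit Types (p : {mpoly R[k]}) (c a : 'I_k -> R).

Lemma mcoeffU_sumZX c i : (\sum_j c j *: 'X_j : {mpoly R[k]})@_U_(i) = c i.
Proof.
rewrite raddf_sum (bigD1 i) //= mcoeffZ mcoeffXU eqxx mulr1 big1 ?addr0 // => j nji.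
by rewrite mcoeffZ mcoeffXU (negbTE nji) mulr0.
Qed.

Lemma dhomog1_sumZX c : (\sum_j c j *: 'X_j : {mpoly R[k]}) \is 1.-homog.
Proof. by rewrite rpred_sum // => j _; rewrite rpredZ // dhomogX; apply/eqP/mdeg1. Qed.

Lemma homog1_sumZXE p : p \is 1.-homog -> p = \sum_i p@_U_(i) *: 'X_i.
Proof.
move=> p_homog; apply/mpolyP => m.
have [/mdeg1P [i /eqP ->]|m_deg] := boolP (mdeg m == 1%N).
  by rewrite mcoeffU_sumZX.
by rewrite !(dhomog_nemf_coeff _ m_deg) // dhomog1_sumZX.
Qed.

Lemma homog1_mevalE p a : p \is 1.-homog -> p.@[a] = \sum_i p@_U_(i) * a i.
Proof.
move=> p_homog; rewrite {1}(homog1_sumZXE p_homog) raddf_sum.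
by apply: eq_bigr => i _; rewrite /= mevalZ mevalXU.
Qed.

End LinearForms.

Lemma mpolyXU_neq0 {R : nzRingType} {k} (i : 'I_k) : ('X_i : {mpoly R[k]}) != 0.
Proof.
apply: contra_neq (@oner_neq0 R) => Xi0.
by have := mcoeffXU R i i; rewrite Xi0 mcoeff0 eqxx => ->.
Qed.

Lemma meval_dhomog_scale (R : comNzRingType) k (q : {mpoly R[k]}) e t a :
  q \is e.-homog -> q.@[fun i => t * a i] = t ^+ e * q.@[a].
Proof.
move=> q_homog; rewrite !mevalE mulr_sumr !big_seq; apply: eq_bigr => mu mu_supp.
under eq_bigr do rewrite exprMn.
by rewrite big_split /= prodrXr -mdegE (dhomog_mf q_homog mu_supp) mulrCA.
Qed.

Section HomogeneousComponents.
Variables (R : nzRingType) (k : nat).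
Implicit Types (g F : {mpoly R[k]}).

Lemma pihomog_msize_eq0 g e : (msize g <= e)%N -> pihomog mdeg e g = 0.
Proof.
move=> g_size; rewrite pihomogE big1_seq // => mu /andP [/eqP mu_deg mu_supp].
by have := msize_mdeg_lt mu_supp; rewrite mu_deg ltnNge g_size.
Qed.

Lemma mcoeff_pihomog_mdeg g mu : (pihomog mdeg (mdeg mu) g)@_mu = g@_mu.
Proof.
rewrite pihomogE [in RHS](mpolyE g) !raddf_sum /= big_mkcond /=.
apply: eq_bigr => m _; rewrite mcoeffZ mcoeffX.
by case: (m =P mu) => [->|_]; rewrite ?eqxx // mulr0 if_same.
Qed.

Lemma mderivm_dhomog_eq0 F d mu : F \is d.-homog -> (d < mdeg mu)%N -> F^`M[mu] = 0.
Proof.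
move=> F_homog d_lt; apply/mpolyP => m; rewrite mcoeff_mderivm mcoeff0.
rewrite (dhomog_nemf_coeff F_homog) ?mul0rn //=.
by rewrite mdegD gtn_eqF // (leq_trans d_lt) ?leq_addr.
Qed.

End HomogeneousComponents.

Lemma poly_eq0_on_nonzero (R : numDomainType) (p : {poly R}) :
  (forall t, t != 0 -> p.[t] = 0) -> p = 0.
Proof.
move=> p0; apply: (@roots_geq_poly_eq0 _ p [seq i.+1%:R | i <- iota 0 (size p)]).
- by apply/allP => _ /mapP [i _ ->]; apply/rootP/p0; rewrite pnatr_eq0.
- by rewrite map_inj_uniq ?iota_uniq // => i j /eqP; rewrite eqr_nat => /eqP [].
- by rewrite size_map size_iota.
Qed.

Lemma pihomog_cone_vanish (R : numDomainType) k (P : ('I_k -> R) -> Prop)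
    (g : {mpoly R[k]}) :
  (forall t a, t != 0 -> P a -> P (fun i => t * a i)) ->
  (forall a, P a -> g.@[a] = 0) -> forall e a, P a -> (pihomog mdeg e g).@[a] = 0.
Proof.
move=> P_cone g0 e a Pa.
have [g_size|e_lt] := leqP (msize g) e; first by rewrite pihomog_msize_eq0 ?meval0.
pose q := \poly_(i < msize g) (pihomog mdeg i g).@[a].
suff /(congr1 (fun q : {poly R} => q`_e)) : q = 0 by rewrite coef_poly e_lt coef0.
apply: poly_eq0_on_nonzero => t t_neq0.
rewrite horner_poly -[RHS](g0 _ (P_cone t a t_neq0 Pa)).
rewrite [in RHS](pihomog_partitionE (k := msize g) (leqnn _)) raddf_sum.
by apply: eq_bigr => i _; rewrite /= (meval_dhomog_scale _ _ (pihomogP _ _ _)) mulrC.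
Qed.

Section StarConfiguration.
Variables (n r : nat) (l : 'I_r -> {mpoly C[n.+1]}).
Hypothesis l_homog : forall j, l j \is 1.-homog.
Hypothesis l_indep : any_np1_independent l.
Implicit Types (J K : {set 'I_r}) (a : 'I_n.+1 -> C).

Definition lin_coefmx k (s : 'I_k -> 'I_r) : 'M[C]_(n.+1, k) :=
  \matrix_(i, j) (l (s j))@_U_(i).

Lemma meval_lin_coefmx k (s : 'I_k -> 'I_r) a j :
  (l (s j)).@[a] = (\row_i a i *m lin_coefmx s) 0 j.
Proof.
by rewrite homog1_mevalE // !mxE; apply: eq_bigr => i _; rewrite !mxE mulrC.
Qed.

Lemma lin_coefmx_det_neq0 (s : 'I_n.+1 -> 'I_r) :
  injective s -> \det (lin_coefmx s) != 0.
Proof.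
move=> s_inj; rewrite -det_tr; apply/det0P => -[v /eqP v_neq0 vM0]; apply: v_neq0.
apply/rowP => k; rewrite mxE; apply: (l_indep s_inj (c := fun k => v 0 k) _ k).
have sum_homog : \sum_k v 0 k *: l (s k) \is 1.-homog.
  by rewrite rpred_sum // => k' _; rewrite rpredZ.
rewrite (homog1_sumZXE sum_homog) big1 // => i _.
suff -> : (\sum_k v 0 k *: l (s k))@_U_(i) = (v *m (lin_coefmx s)^T) 0 i.
  by rewrite vM0 mxE scale0r.
by rewrite raddf_sum !mxE; apply: eq_bigr => k' _; rewrite /= mcoeffZ !mxE.
Qed.

Lemma lin_forms_common_zero (K : {set 'I_r}) a : (n < #|K|)%N ->
  (forall j, j \in K -> (l j).@[a] = 0) -> forall i, a i = 0.
Proof.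
move=> K_big aK i; pose s k := enum_val (widen_ord K_big k).
have s_inj : injective s by move=> k1 k2 /enum_val_inj [] /val_inj.
apply/eqP; apply: contraNT (lin_coefmx_det_neq0 s_inj) => ai_neq0.
apply/det0P; exists (\row_i a i).
  by apply: contra_neq ai_neq0 => /rowP/(_ i); rewrite !mxE.
by apply/rowP => k; rewrite -meval_lin_coefmx mxE aK ?enum_valP.
Qed.

Lemma star_point (J : {set 'I_r}) : #|J| = n ->
  exists2 a, nonzero_vec a & forall j, ((l j).@[a] == 0) = (j \in J).
Proof.
move=> cardJ; pose B := lin_coefmx (@enum_val _ (mem J)).
have /rowV0Pn [v /sub_kermxP vB0 v_neq0] : kermx B != 0.
  rewrite -mxrank_eq0 mxrank_ker subn_eq0 -ltnNge.
  by rewrite (leq_ltn_trans (rank_leq_col B)) ?cardJ.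
pose a i := v 0 i; have va : \row_i a i = v by apply/rowP => i; rewrite mxE.
have aJ j : j \in J -> (l j).@[a] = 0.
  by move=> jJ; rewrite -(enum_rankK_in jJ jJ) meval_lin_coefmx va vB0 mxE.
have a_neq0 : nonzero_vec a.
  apply/existsP; apply: contra_neqT v_neq0 => /existsPn a0.
  by rewrite -va; apply/rowP => i; rewrite !mxE; apply/eqP/negPn.
exists a => // j; have [jJ|jNJ] := boolP (j \in J); first by rewrite aJ ?eqxx.
apply/negbTE/eqP => laj; case: a_neq0 => i; apply/negP; rewrite negbK; apply/eqP.
apply: (@lin_forms_common_zero (j |: J)) => [|j'].
  by rewrite cardsU1 jNJ cardJ.
by rewrite in_setU1 => /predU1P [->|/aJ].
Qed.

Lemma in_star_scale t a : t != 0 -> in_star l a -> in_star l (fun i => t * a i).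
Proof.
move=> t_neq0 [[i ai_neq0] [J [cardJ aJ]]]; split; first by exists i; rewrite mulf_neq0.
by exists J; split=> // j jJ; rewrite (meval_dhomog_scale _ _ (l_homog j)) aJ ?mulr0.
Qed.

(* The order on C, hence its characteristic 0, is only visible on R[i]. *)
Lemma star_ideal_pihomog g e :
  in_ideal_star l g -> in_ideal_star l (pihomog mdeg e g).
Proof.
by move=> g_van; apply: (@pihomog_cone_vanish (Rdefinitions.R)[i] _ _ _ in_star_scale).
Qed.

Definition star_form (J : {set 'I_r}) : {mpoly C[n.+1]} := \prod_(j in ~: J) l j.

Lemma star_form_homog J : #|J| = n -> star_form J \is (r - n).-homog.
Proof.
move=> cardJ; have <- : #|~: J| = (r - n)%N.
  by have := cardsC J; rewrite cardJ card_ord; lia.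
rewrite -sum1_card; apply: (big_ind2 (fun p e => p \is e.-homog)) => //.
- exact: dhomog1.
- by move=> p1 e1 p2 e2; apply: dhomogM.
Qed.

Lemma meval_star_form_eq0 J K a : #|J| = n -> #|K| = n ->
  (forall j, ((l j).@[a] == 0) = (j \in K)) -> ((star_form J).@[a] == 0) = (J != K).
Proof.
move=> cardJ cardK aK; rewrite [J == K]eq_sym eqEcard cardJ cardK leqnn andbT.
rewrite /star_form rmorph_prod; apply/prodf_eq0/subsetPn => [[j]|[j jK jNJ]].
  by rewrite inE aK => jNJ jK; exists j.
by exists j; rewrite ?inE ?aK.
Qed.

Definition star_sets : seq {set 'I_r} := enum [set J : {set 'I_r} | #|J| == n].

Definition star_basis : seq (dhomog n.+1 C (r - n)) :=
  [seq indhomog (r - n) (star_form J) | J <- star_sets].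

Lemma card_star_sets J : J \in star_sets -> #|J| = n.
Proof. by rewrite mem_enum inE => /eqP. Qed.

Lemma size_star_basis : size star_basis = 'C(r, n).
Proof. by rewrite size_map -cardE card_draws card_ord. Qed.

Lemma star_combination_eq0 (c : 'I_(size star_basis) -> C) :
  in_ideal_star l (val (\sum_i c i *: star_basis`_i)) -> forall i, c i = 0.
Proof.
have size_sets : size star_basis = size star_sets by rewrite size_map.
have basis_nth (i : 'I_(size star_basis)) :
    val star_basis`_i = star_form (nth set0 star_sets i).
  have i_lt : (i < size star_sets)%N by rewrite -size_sets.
  rewrite (nth_map set0) // insubdK //.
  exact/star_form_homog/card_star_sets/mem_nth.
move=> c_van i; pose J := nth set0 star_sets i.
have cardJ : #|J| = n by apply/card_star_sets/mem_nth; rewrite -size_sets.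
have [a a_neq0 aJ] := star_point cardJ.
have a_star : in_star l a by split=> //; exists J; split=> // j; rewrite -aJ => /eqP.
have := c_van a a_star; rewrite !raddf_sum (bigD1 i) //= big1 ?addr0 => [|k k_neq_i].
  rewrite linearZ /= basis_nth => /eqP.
  by rewrite mulf_eq0 (meval_star_form_eq0 cardJ cardJ aJ) eqxx orbF => /eqP.
have k_lt : (k < size star_sets)%N by rewrite -size_sets.
rewrite linearZ /= basis_nth; apply/eqP; rewrite mulf_eq0.
rewrite (meval_star_form_eq0 _ cardJ aJ) ?card_star_sets ?mem_nth //.
by rewrite nth_uniq ?enum_uniq -?size_sets // k_neq_i orbT.
Qed.

Lemma star_ideal_dhomog_eq0 h : (n <= r)%N -> h \is (r - n).-homog ->
  in_ideal_star l h -> h = 0.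
Proof.
move=> n_le_r h_homog h_van.
have basis_free : free star_basis.
  have /= freeP_basis := freeP (X := in_tuple star_basis).
  apply/freeP_basis => c c0; apply: star_combination_eq0.
  by move=> a _; rewrite c0 linear0.
have /span_basis span_full : basis_of fullv star_basis.
  have dim_full : \dim {: dhomog n.+1 C (r - n)} = 'C(r, n).
    rewrite dimvf; change ('C(r - n + n, r - n) = 'C(r, n)).
    by rewrite subnK // bin_sub.
  by rewrite basisEfree basis_free subvf dim_full size_star_basis leqnn.
pose h' := indhomog (r - n) h; have h'h : val h' = h by apply: insubdK.
have := coord_span (X := in_tuple star_basis) (v := h').
rewrite span_full memvf => /(_ isT) h'E; rewrite -h'h h'E big1 ?linear0 // => i _.
rewrite (@star_combination_eq0 (fun i => coord (in_tuple star_basis) i h')) ?scale0r //.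
by rewrite -h'E h'h.
Qed.

Lemma star_ideal_pihomog_eq0 g e : (n <= r)%N -> in_ideal_star l g ->
  (e <= r - n)%N -> pihomog mdeg e g = 0.
Proof.
move=> n_le_r g_van e_le; set ge := pihomog mdeg e g.
have X_homog : ('X_ord0 : {mpoly C[n.+1]}) \is 1.-homog.
  by rewrite dhomogX; apply/eqP/mdeg1.
have padded_homog : ge * 'X_ord0 ^+ (r - n - e) \is (r - n).-homog.
  have := dhomogM (pihomogP mdeg e g) (dhomogMn (r - n - e) X_homog).
  by rewrite mul1n subnKC.
have padded_van : in_ideal_star l (ge * 'X_ord0 ^+ (r - n - e)).
  by move=> a a_star; rewrite rmorphM /= (star_ideal_pihomog e g_van a_star) mul0r.
move/eqP: (star_ideal_dhomog_eq0 n_le_r padded_homog padded_van).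
by rewrite mulf_eq0 expf_eq0 (negbTE (mpolyXU_neq0 _)) andbF orbF => /eqP.
Qed.

Lemma star_apolar_dhomog F d : F \is d.-homog -> (d + n <= r)%N -> star_apolar l F.
Proof.
move=> F_homog dn_le g g_van; rewrite /diff_act big1_seq // => mu _.
have [mu_le|d_lt] := leqP (mdeg mu) d; last first.
  by rewrite (mderivm_dhomog_eq0 F_homog d_lt) scaler0.
rewrite -mcoeff_pihomog_mdeg star_ideal_pihomog_eq0 ?mcoeff0 ?scale0r //; lia.
Qed.

End StarConfiguration.

Section VandermondeForms.
Variables (n r : nat) (x : 'I_r -> C).

Definition vandermonde_form j : {mpoly C[n.+1]} := \sum_(i < n.+1) x j ^+ i *: 'X_i.

Lemma vandermonde_form_homog j : vandermonde_form j \is 1.-homog.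
Proof. exact: dhomog1_sumZX. Qed.

Lemma vandermonde_form_indep : injective x -> any_np1_independent vandermonde_form.
Proof.
move=> x_inj s s_inj c c0; pose V := Vandermonde n.+1 (\row_k x (s k)).
have V_det : \det V^T != 0.
  rewrite det_tr det_Vandermonde; apply/prodf_neq0 => i _; apply/prodf_neq0 => j ij.
  by rewrite !mxE subr_eq0 (inj_eq x_inj) (inj_eq s_inj) -val_eqE (gtn_eqF ij).
have cV0 : \row_k c k *m V^T = 0.
  apply/rowP => i; rewrite !mxE.
  transitivity ((\sum_k c k *: vandermonde_form (s k))@_U_(i)).
    by rewrite raddf_sum; apply: eq_bigr => k _; rewrite !mxE /= mcoeffZ mcoeffU_sumZX.
  by rewrite c0 mcoeff0.
move=> k; apply/eqP; apply: contraNT V_det => ck_neq0; apply/det0P.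
by exists (\row_k c k) => //; apply: contra_neq ck_neq0 => /rowP/(_ k); rewrite !mxE.
Qed.

End VandermondeForms.

Theorem lemma3p1 (d n r : nat) (hd : (1 <= d)%N) (hn : (1 <= n)%N)
  (hr : (d + n <= r)%N) :
  exists U : {mpoly C[n.+1]} -> Prop,
    @zariski_open_forms n.+1 d U /\
    (exists F : {mpoly C[n.+1]}, F \is d.-homog /\ U F) /\
    (forall F : {mpoly C[n.+1]}, F \is d.-homog -> U F -> @has_apolar_star n r F).
Proof.
have nat_inj : injective (fun j : 'I_r => (j%:R : C)).
  by move=> i j /eqP; rewrite (@eqr_nat (Rdefinitions.R)[i]) => /eqP /val_inj.
exists (fun _ => True); split.
  exists (eq 1) => F _; split=> // _; exists 1; split=> //.
  by rewrite rmorph1 oner_neq0.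
split; first by exists 0; rewrite dhomog0.
move=> F F_homog _; pose l := vandermonde_form n (fun j : 'I_r => (j%:R : C)).
have l_homog : forall j, l j \is 1.-homog := vandermonde_form_homog n _.
have l_indep : any_np1_independent l := vandermonde_form_indep nat_inj.
by exists l; split; last split; last exact: star_apolar_dhomog F_homog hr.
Qed.
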